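(* Let $A$ be a cyclic Leibniz algebra generated by $a$, with $p(x)$ as in the context. Then $\Phi(A)=0$ if and only if $p(x)$ is a product of distinct irreducible factors (i.e. $n_1=\cdots=n_s=1$).
   Context: A (left) Leibniz algebra is an algebra satisfying $x(yz)=(xy)z+y(xz)$ for all $x,y,z$; all algebras are finite-dimensional over a field $F$. $A$ is a cyclic Leibniz algebra generated by $a$: $A$ is generated as an algebra by the single element $a$, and with $a^1=a$, $a^{k+1}=aa^k$, the elements $a,a^2,\dots,a^n$ form a basis of $A$. Write $aa^n=\alpha_2a^2+\cdots+\alpha_na^n$. $L_a:A\to A$ is $b\mapsto ab$, with characteristic (and minimal) polynomial $p(x)=x^n-\alpha_nx^{n-1}-\cdots-\alpha_2x=p_1(x)^{n_1}\cdots p_s(x)^{n_s}$, the $p_j$ distinct monic irreducibles over $F$, $p_1(x)=x$. $\Phi(A)$ is the intersection of all maximal subalgebras of $A$. *)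

From HB Require Import structures.
From mathcomp Require Import all_boot all_order all_algebra.
Set Implicit Arguments. Unset Strict Implicit. Unset Printing Implicit Defensive.
Import GRing.Theory.
Local Open Scope ring_scope.

(* An n-dimensional algebra over F is modelled on 'rV[F]_n with a
   multiplication mul (assumed bilinear in the theorem). *)
Section Leib.
Variables (F : fieldType) (n : nat) (mul : 'rV[F]_n -> 'rV[F]_n -> 'rV[F]_n).

Definition bilinear_mul : Prop :=
  (forall x, linear (mul x)) /\ (forall y, linear (fun x => mul x y)).

Definition left_leibniz : Prop :=
  forall x y z, mul x (mul y z) = mul (mul x y) z + mul y (mul x z).

(* lpow a k = a^(k+1), with a^1 = a and a^(k+1) = a a^k *)
Fixpoint lpow (a : 'rV[F]_n) (k : nat) : 'rV[F]_n :=
  if k is k'.+1 then mul a (lpow a k') else a.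

Definition cyclic_basis (a : 'rV[F]_n) : Prop :=
  basis_of fullv (mkseq (lpow a) n).

Definition is_subalgebra (U : {vspace 'rV[F]_n}) : Prop :=
  forall x y, x \in U -> y \in U -> mul x y \in U.

Definition is_maximal_subalgebra (M : {vspace 'rV[F]_n}) : Prop :=
  [/\ is_subalgebra M, M != fullv%VS &
      forall U : {vspace 'rV[F]_n}, is_subalgebra U -> (M <= U)%VS ->
        U != fullv%VS -> U = M].

Definition in_frattini (x : 'rV[F]_n) : Prop :=
  forall M, is_maximal_subalgebra M -> x \in M.

Definition frattini_trivial : Prop := forall x, in_frattini x -> x = 0.

(* matrix of the left multiplication L_a : b |-> a b (row-vector convention) *)
Definition Lmx (a : 'rV[F]_n) : 'M[F]_n := lin1_mx (mul a).

End Leib.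

From HB Require Import structures.
From mathcomp Require Import all_boot all_order all_algebra.
From Stdlib Require Import Classical.
Set Implicit Arguments. Unset Strict Implicit. Unset Printing Implicit Defensive.
Import GRing.Theory.
Local Open Scope ring_scope.

(* The evaluation map phi : g |-> g(L_a) a is onto A with kernel p F[x].
   The Leibniz identity makes A^2 annihilate A from the left, so that
   L_{phi g} = g(0) L_a; hence L_a-stable subspaces are subalgebras, and a
   subalgebra not inside A^2 = x(L_a) A is L_a-stable, i.e. phi of an ideal.
   From this the maximal subalgebras are exactly the q(L_a) A for the
   irreducible factors q of p, so phi f lies in Phi(A) iff every
   irreducible factor of p divides f.  Phi(A) = 0 thus says that p divides
   every such f, which is equivalent to p being squarefree. *)

Lemma ex_minimizer (T : Type) (m : T -> nat) (P : T -> Prop) x0 :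
  P x0 -> exists x, P x /\ forall y, P y -> (m x <= m y)%N.
Proof.
move=> Px0; apply: NNPP => no_min.
suff /(_ _ _ (leqnn _) Px0) : forall k x, (m x <= k)%N -> ~ P x by [].
elim=> [|k IH] x le_xk Px; apply: no_min; exists x; split=> // y Py.
  exact: leq_trans le_xk (leq0n _).
rewrite leqNgt; apply/negP => lt_yx; apply: (IH y) => //.
by rewrite -ltnS (leq_trans lt_yx).
Qed.

Section PolyFacts.
Variable F : fieldType.
Implicit Types d f g p q : {poly F}.

Lemma irredp_dvd_mul q f g :
  irreducible_poly q -> q %| f * g -> (q %| f) \/ (q %| g).
Proof.
move=> irr_q; have [|not_qf] := boolP (q %| f); first by left.
by rewrite Gauss_dvdpr ?irreducible_poly_coprime //; right.
Qed.

Lemma irredp_dvd_eqp q q' :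
  irreducible_poly q -> (1 < size q')%N -> q' %| q -> q' %= q.
Proof. by move=> irr_q /gtn_eqF /negbT; apply: irr_q. Qed.

(* Every non-constant polynomial has an irreducible factor: take a
   non-constant divisor of least size. *)
Lemma irredp_factor d :
  (1 < size d)%N -> exists2 q, irreducible_poly q & q %| d.
Proof.
move=> d_gt1; have [q [[q_gt1 q_d] q_min]] :=
  @ex_minimizer _ (fun e : {poly F} => size e)
    (fun e => (1 < size e)%N /\ e %| d) d (conj d_gt1 (dvdpp d)).
exists q => //; split=> // e e_neq1 e_q.
have q_neq0 : q != 0 by rewrite -size_poly_gt0 ltnW.
have e_gt1 : (1 < size e)%N.
  by rewrite ltn_neqAle eq_sym e_neq1 size_poly_gt0 (dvdpN0 e_q q_neq0).
rewrite -dvdp_size_eqp // eqn_leq dvdp_leq //=.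
exact: q_min (conj e_gt1 (dvdp_trans e_q q_d)).
Qed.

(* A predicate on polynomials closed under subtraction and under
   multiplication by arbitrary polynomials (an ideal) that contains a
   nonzero element is generated by any of its nonzero elements of least size. *)
Lemma poly_ideal_generator (I : {poly F} -> Prop) f0 :
  (forall f g, I f -> I g -> I (f - g)) -> (forall f g, I f -> I (g * f)) ->
  f0 != 0 -> I f0 -> exists2 d, d != 0 /\ I d & forall f, I f -> d %| f.
Proof.
move=> IB IM f0_neq0 If0.
have [d [[d_neq0 Id] d_min]] :=
  @ex_minimizer _ (fun e : {poly F} => size e)
    (fun e => e != 0 /\ I e) f0 (conj f0_neq0 If0).
exists d => // f If; apply/modp_eq0P/eqP; apply: contraT => r_neq0.
have Ir : I (f %% d).
  by have := IB _ _ If (IM _ (f %/ d) Id); rewrite {1}(divp_eq f d) addrAC subrr add0r.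
by have := d_min _ (conj r_neq0 Ir); rewrite leqNgt ltn_modp d_neq0.
Qed.

Lemma dvdpX g : ('X %| g) = (g`_0 == 0).
Proof. by rewrite -['X]subr0 -polyC0 dvdp_XsubCl /root horner_coef0. Qed.

(* x is irreducible; x(L_a) A = A^2 will be the maximal subalgebra it gives. *)
Lemma irredp_X : irreducible_poly ('X : {poly F}).
Proof. by rewrite -['X]subr0 -polyC0; apply: irredp_XsubC. Qed.

Definition squarefree p : Prop := forall q, irreducible_poly q -> ~~ (q ^+ 2 %| p).

Definition prime_factors_dvd p f : Prop :=
  forall q, irreducible_poly q -> q %| p -> q %| f.

(* A nonzero squarefree polynomial divides every f that all of its
   irreducible factors divide; by induction on the size of p, splitting
   off one irreducible factor. *)
Lemma squarefree_dvd p f :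
  p != 0 -> squarefree p -> prime_factors_dvd p f -> p %| f.
Proof.
elim: {p}(size p) {-2}p (leqnn (size p)) f => [|k IH] p le_pk f p_neq0 sqf_p pf_pf.
  by move: le_pk; rewrite leqn0 size_poly_eq0 (negPf p_neq0).
have [p_le1|p_gt1] := leqP (size p) 1.
  by apply: dvdUp; rewrite -size_poly_eq1 eqn_leq p_le1 size_poly_gt0.
have [q irr_q q_p] := irredp_factor p_gt1.
have q_neq0 := irredp_neq0 irr_q.
have [p' def_p] := dvdpP _ _ q_p; have [f' def_f] := dvdpP _ _ (pf_pf q irr_q q_p).
have p'_neq0 : p' != 0 by apply: contraNneq p_neq0 => p'0; rewrite def_p p'0 mul0r.
rewrite def_p def_f dvdp_mul2r //; apply: IH => // [|q' irr_q'|q' irr_q' q'_p'].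
- rewrite -ltnS (leq_trans _ le_pk) // def_p size_mul //.
  by case: (size q) irr_q.1 => [|[|m]] // _; rewrite !addnS /= ltnS leq_addr.
- by apply: contra (sqf_p q' irr_q'); rewrite def_p; apply: dvdp_mulr.
have [//|q'_q] : q' %| f' \/ q' %| q.
  by apply: (irredp_dvd_mul irr_q'); rewrite -def_f pf_pf // def_p dvdp_mulr.
have q'_eqp := irredp_dvd_eqp irr_q irr_q'.1 q'_q.
case/negP: (sqf_p q irr_q); rewrite def_p expr2 dvdp_mul2r //.
by rewrite -(eqp_dvdl _ q'_eqp).
Qed.

(* Conversely, if q^2 divides p then p %/ q is such a polynomial. *)
Lemma squarefreeP p :
  p != 0 -> squarefree p <-> (forall f, prime_factors_dvd p f -> p %| f).
Proof.
move=> p_neq0; split=> [sqf_p f|dvd_p q irr_q]; first exact: squarefree_dvd.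
apply/negP => q2_p; have q_neq0 := irredp_neq0 irr_q.
have q_p : q %| p by apply: dvdp_trans q2_p; rewrite expr2 dvdp_mulr.
have def_p : p = p %/ q * q by rewrite divpK.
have r_neq0 : p %/ q != 0.
  by apply: contraNneq p_neq0 => r0; rewrite def_p r0 mul0r.
suff /(dvdp_leq r_neq0) : p %| p %/ q.
  rewrite size_divp // leqNgt ltn_subrL size_poly_gt0 p_neq0 andbT.
  by rewrite -subn1 subn_gt0 irr_q.1.
apply: dvd_p => q' irr_q' q'_p.
have [//|q'_q] : q' %| p %/ q \/ q' %| q.
  by apply: (irredp_dvd_mul irr_q'); rewrite -def_p.
rewrite (eqp_dvdl _ (irredp_dvd_eqp irr_q irr_q'.1 q'_q)).
by rewrite -(dvdp_mul2r _ _ q_neq0) -def_p -expr2.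
Qed.

End PolyFacts.

Section CyclicLeibnizAlgebra.
Variables (F : fieldType) (n' : nat).
Local Notation n := n'.+1.
Variables (mul : 'rV[F]_n -> 'rV[F]_n -> 'rV[F]_n) (a : 'rV[F]_n).
Hypotheses (bil : bilinear_mul mul) (leib : left_leibniz mul)
  (cyc : cyclic_basis mul a).
Implicit Types (f g q : {poly F}) (V M : {vspace 'rV[F]_n}).

Local Notation La := (Lmx mul a).
Local Notation p := (char_poly La).

Let mul_left x : {linear 'rV[F]_n -> 'rV[F]_n} :=
  HB.pack (mul x) (GRing.isLinear.Build _ _ _ _ (mul x) (bil.1 x)).
Let mul_right y : {linear 'rV[F]_n -> 'rV[F]_n} :=
  HB.pack (fun x => mul x y) (GRing.isLinear.Build _ _ _ _ _ (bil.2 y)).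

Lemma mulvDr x u v : mul x (u + v) = mul x u + mul x v.
Proof. exact: (linearD (mul_left x)). Qed.
Lemma mulvZr x k u : mul x (k *: u) = k *: mul x u.
Proof. exact: (linearZZ (mul_left x)). Qed.
Lemma mulv0 x : mul x 0 = 0.
Proof. exact: (linear0 (mul_left x)). Qed.
Lemma mulvDl y u v : mul (u + v) y = mul u y + mul v y.
Proof. exact: (linearD (mul_right y)). Qed.
Lemma mulvZl y k u : mul (k *: u) y = k *: mul u y.
Proof. exact: (linearZZ (mul_right y)). Qed.
Lemma mul0v y : mul 0 y = 0.
Proof. exact: (linear0 (mul_right y)). Qed.

Lemma mulmx_La v : v *m La = mul a v.
Proof. exact: (mul_rV_lin1 (mul_left a)). Qed.

(* The evaluation map g |-> g(L_a) a; it sends 'X^k to a^(k+1), so the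
   cyclic basis makes it onto A, with kernel the multiples of p. *)
Definition phi : {linear {poly F} -> 'rV[F]_n} := (mulmx a \o horner_mx La)%FUN.

Lemma phiM f g : phi (f * g) = phi f *m horner_mx La g.
Proof. by rewrite /= rmorphM mulmxA. Qed.

Lemma phiMX g : phi (g * 'X) = mul a (phi g).
Proof. by rewrite phiM horner_mx_X mulmx_La. Qed.

Lemma phi1 : phi 1 = a.
Proof. by rewrite /= rmorph1 mulmx1. Qed.

Lemma phiC c : phi c%:P = c *: a.
Proof. by rewrite -alg_polyC linearZ phi1. Qed.

Lemma phiXn k : phi 'X^k = lpow mul a k.
Proof. by elim: k => [|k IHk]; rewrite ?expr0 ?phi1 // exprSr phiMX IHk. Qed.

Lemma phi_surj x : exists g, x = phi g.
Proof.
have : x \in <<mkseq (lpow mul a) n>>%VS by rewrite (span_basis cyc) memvf.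
move/coord_span => ->; exists (\sum_i coord (mkseq (lpow mul a) n) i x *: 'X^i).
rewrite linear_sum; apply: eq_bigr => i _.
by rewrite linearZ phiXn (nth_map 0%N) ?nth_iota ?size_iota.
Qed.

(* a, a^2, ..., a^n are free, so phi is injective on polynomials of size <= n *)
Lemma phi_small_eq0 f : (size f <= n)%N -> phi f = 0 -> f = 0.
Proof.
move=> f_small phi_f0; apply/polyP => i; rewrite coef0.
have [lt_in|le_ni] := ltnP i n; last by rewrite nth_default // (leq_trans f_small).
have def_f : f = \sum_(j < n) f`_j *: 'X^j.
  rewrite -poly_def; apply/polyP => j; rewrite coef_poly.
  by case: ltnP => // /(leq_trans f_small) le_fj; rewrite nth_default.
have /freeP free_pows := basis_free cyc.
apply: (free_pows (fun j => f`_j) _ (Ordinal lt_in)).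
rewrite -[RHS]phi_f0 [in RHS]def_f linear_sum; apply: eq_bigr => j _.
by rewrite linearZ phiXn (nth_map 0%N) ?nth_iota ?size_iota.
Qed.

Lemma charpoly_neq0 : p != 0.
Proof. exact: monic_neq0 (char_poly_monic La). Qed.

(* The kernel of phi is the ideal generated by p: Cayley-Hamilton gives one
   inclusion, reduction modulo p and phi_small_eq0 the other. *)
Lemma phi_eq0 f : (phi f == 0) = (p %| f).
Proof.
apply/eqP/idP => [phi_f0|/dvdpP [g ->]]; last first.
  by rewrite phiM Cayley_Hamilton mulmx0.
apply/modp_eq0P/phi_small_eq0.
  by rewrite -ltnS -(size_char_poly La) ltn_modp charpoly_neq0.
move: phi_f0; rewrite {1}(divp_eq f p) linearD phiM.
by rewrite Cayley_Hamilton mulmx0 add0r.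
Qed.

(* The Leibniz identity with x = y = a gives (aa)z = 0. *)
Lemma mul_aa_l z : mul (mul a a) z = 0.
Proof. by apply/(addIr (mul a (mul a z))); rewrite add0r -leib. Qed.

(* More generally A^2 = aA annihilates A from the left: by induction on
   w = phi g, using the Leibniz identity for a, a w and z. *)
Lemma mul_La_l w z : mul (mul a w) z = 0.
Proof.
have [g ->] := phi_surj w; elim/poly_ind: g z => [|g c IHg] z.
  by rewrite linear0 mulv0 mul0v.
rewrite linearD phiMX phiC mulvDr mulvZr mulvDl mulvZl mul_aa_l scaler0 addr0.
by have := leib a (mul a (phi g)) z; rewrite !IHg mulv0 addr0.
Qed.

Lemma mul_phi_l g z : mul (phi g) z = g`_0 *: mul a z.
Proof.
elim/poly_ind: g => [|g c IHg]; first by rewrite linear0 mul0v coef0 scale0r.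
rewrite linearD phiMX phiC mulvDl mulvZl mul_La_l add0r.
by rewrite coefD coefMX coefC /= add0r.
Qed.

(* x is a root of p: otherwise p(0) L_a = L_{phi p} = 0 forces L_a = 0,
   whose characteristic polynomial has no constant term. *)
Lemma X_dvd_charpoly : 'X %| p.
Proof.
rewrite dvdpX; apply: contraT => p0_neq0.
have La0 : La = 0.
  apply/row_matrixP => i; rewrite row0 rowE mulmx_La.
  have /eqP phi_p0 : phi p == 0 by rewrite phi_eq0.
  have /esym/eqP := mul_phi_l p (delta_mx 0 i).
  by rewrite phi_p0 mul0v scaler_eq0 (negPf p0_neq0) => /eqP.
by move: p0_neq0; rewrite char_poly_det La0 det0 mulr0 eqxx.
Qed.

Definition La_stable V : Prop := forall v, v \in V -> mul a v \in V.

(* Since every L_x is a multiple of L_a, L_a-stable subspaces are subalgebras. *)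
Lemma La_stable_subalgebra V : La_stable V -> is_subalgebra mul V.
Proof.
by move=> stV x y _ y_V; have [g ->] := phi_surj x; rewrite mul_phi_l memvZ ?stV.
Qed.

Lemma La_stable_ideal V f g : La_stable V -> phi f \in V -> phi (g * f) \in V.
Proof.
move=> stV f_V; elim/poly_ind: g => [|g c IHg].
  by rewrite mul0r linear0 mem0v.
by rewrite mulrDl mulrAC linearD phiMX mul_polyC linearZ memvD ?memvZ ?stV.
Qed.

(* The subspace q(L_a) A = phi(q F[x]), the image of q(L_a). *)
Definition qspace q : {vspace 'rV[F]_n} :=
  (linfun (mulmxr (horner_mx La q)) @: fullv)%VS.

Lemma qspaceP q x : reflect (exists g, x = phi (g * q)) (x \in qspace q).
Proof.
apply: (iffP memv_imgP) => [[u _ ->]|[g ->]].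
  by have [g ->] := phi_surj u; exists g; rewrite lfunE phiM.
by exists (phi g); rewrite ?memvf // lfunE phiM.
Qed.

Lemma mem_qspace q f : q %| p -> (phi f \in qspace q) = (q %| f).
Proof.
move=> q_p; apply/qspaceP/idP => [[g /eqP]|/dvdpP [g ->]]; last by exists g.
rewrite -subr_eq0 -linearB phi_eq0 => /(dvdp_trans q_p).
by rewrite dvdp_subl // dvdp_mull.
Qed.

Lemma qspace_stable q : La_stable (qspace q).
Proof.
by move=> _ /qspaceP [g ->]; apply/qspaceP; exists (g * 'X); rewrite mulrAC phiMX.
Qed.

(* a = phi 1 lies in q(L_a) A only if q is a unit. *)
Lemma qspace_proper q : (1 < size q)%N -> q %| p -> qspace q != fullv.
Proof.
move=> q_gt1 q_p; apply/eqP => qA_full.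
have := memvf (phi 1); rewrite -qA_full mem_qspace // dvdp1 => /eqP q1.
by rewrite q1 in q_gt1.
Qed.

(* A subalgebra not inside A^2 = x(L_a) A contains some phi g with g(0) != 0,
   which acts on the left as the invertible multiple g(0) of L_a. *)
Lemma subalgebra_La_stable V :
  is_subalgebra mul V -> ~~ (V <= qspace 'X)%VS -> La_stable V.
Proof.
move=> subV /subvPn [y y_V]; have [g def_y] := phi_surj y; rewrite def_y in y_V *.
rewrite mem_qspace ?X_dvd_charpoly // dvdpX => g0_neq0 v v_V.
have := memvZ (g`_0)^-1 (subV _ _ y_V v_V).
by rewrite mul_phi_l scalerA mulVf // scale1r.
Qed.

(* Every proper subalgebra lies in some q(L_a) A with q an irreducible factor
   of p: either inside A^2 = x(L_a) A, or L_a-stable, in which case it is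
   phi of a proper ideal d F[x] and any irreducible factor q of d works. *)
Lemma proper_subalgebra_sub V : is_subalgebra mul V -> V != fullv ->
  exists q, [/\ irreducible_poly q, q %| p & (V <= qspace q)%VS].
Proof.
move=> subV V_proper; have [V_X|V_nX] := boolP (V <= qspace 'X)%VS.
  by exists 'X; split; [exact: irredp_X | exact: X_dvd_charpoly |].
have stV := subalgebra_La_stable subV V_nX.
have p_V : phi p \in V by move: (dvdpp p); rewrite -phi_eq0 => /eqP ->; apply: mem0v.
have [d [d_neq0 d_V] d_gen] :=
  @poly_ideal_generator _ (fun f => phi f \in V) p
    (fun f g f_V g_V => etrans (congr1 _ (linearB phi f g)) (memvB f_V g_V))
    (fun f g => La_stable_ideal g stV) charpoly_neq0 p_V.
have d_gt1 : (1 < size d)%N.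
  rewrite ltn_neqAle eq_sym size_poly_gt0 d_neq0 andbT size_poly_eq1.
  apply: contra V_proper => d_unit; rewrite eqEsubv subvf; apply/subvP => x _.
  by have [f ->] := phi_surj x; rewrite -(divpK (dvdUp f d_unit)) La_stable_ideal.
have [q irr_q q_d] := irredp_factor d_gt1.
have q_p : q %| p := dvdp_trans q_d (d_gen p p_V).
exists q; split=> //; apply/subvP => x x_V; have [f def_x] := phi_surj x.
by rewrite def_x in x_V *; rewrite mem_qspace // (dvdp_trans q_d (d_gen f x_V)).
Qed.

Lemma maximal_subalgebraP M : is_maximal_subalgebra mul M <->
  exists q, [/\ irreducible_poly q, q %| p & M = qspace q].
Proof.
have qspace_subalg q : is_subalgebra mul (qspace q).
  exact/La_stable_subalgebra/qspace_stable.
split=> [[subM M_proper M_max] | [q [irr_q q_p ->]]].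
  have [q [irr_q q_p M_q]] := proper_subalgebra_sub subM M_proper.
  by exists q; split=> //; apply/esym/M_max; rewrite ?qspace_proper ?irr_q.1.
split; [exact: qspace_subalg | exact: qspace_proper irr_q.1 q_p |].
move=> V subV qV V_proper.
have [q' [irr_q' q'_p V_q']] := proper_subalgebra_sub subV V_proper.
have q'_q : q' %| q.
  by rewrite -mem_qspace // (subvP V_q') // (subvP qV) // mem_qspace.
have eq_q'q := irredp_dvd_eqp irr_q irr_q'.1 q'_q.
apply/eqP; rewrite eqEsubv qV andbT; apply/subvP => x x_V.
have [f def_x] := phi_surj x.
rewrite def_x in x_V *; rewrite mem_qspace // -(eqp_dvdl _ eq_q'q) -mem_qspace //.
exact: (subvP V_q').
Qed.

Lemma frattiniP f : in_frattini mul (phi f) <-> prime_factors_dvd p f.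
Proof.
split=> [phi_f q irr_q q_p | pf_f M /maximal_subalgebraP [q [irr_q q_p ->]]].
  by rewrite -mem_qspace //; apply/phi_f/maximal_subalgebraP; exists q.
by rewrite mem_qspace // pf_f.
Qed.

(* Hence, phi being onto with kernel p F[x], Phi(A) = 0 says exactly that p
   divides every f all of whose irreducible factors divide. *)
Lemma frattini_trivialP :
  frattini_trivial mul <-> forall f, prime_factors_dvd p f -> p %| f.
Proof.
split=> [triv f /frattiniP phi_f | dvd_p x].
  by rewrite -phi_eq0 (triv _ phi_f).
by have [f ->] := phi_surj x; move/frattiniP/dvd_p; rewrite -phi_eq0 => /eqP.
Qed.

End CyclicLeibnizAlgebra.

Theorem mainTheorem8 (F : fieldType) (n : nat)
    (mul : 'rV[F]_n -> 'rV[F]_n -> 'rV[F]_n) (a : 'rV[F]_n) :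
  (0 < n)%N ->
  bilinear_mul mul -> left_leibniz mul -> cyclic_basis mul a ->
  frattini_trivial mul <->
  (forall q : {poly F}, irreducible_poly q ->
     ~~ (q ^+ 2 %| char_poly (Lmx mul a))%R).
Proof.
case: n mul a => [//|n'] mul a _ bil leib cyc.
apply: iff_trans (frattini_trivialP bil leib cyc) _.
exact: iff_sym (squarefreeP (charpoly_neq0 _ _)).
Qed.
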